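(* Let $m \in \mathbb{N}$ with $m\ge 2$ and $r_m = \sqrt{\frac{2(m+1)}{m}}$, and let $\Phi$ be the map defined in the context. Then for all $[x],[y]\in\mathbb{RP}^m(r_m)$ (with representatives $x,y \in \mathbb{S}^m(r_m)$), $$\|\Phi([x]) - \Phi([y])\|^2 = -\frac{m}{2(m+1)}\langle x,y\rangle^2 + \frac{2(m+1)}{m}.$$ Consequently, for any random variable $X$ with values in $\mathbb{RP}^m(r_m)$, $$\operatorname{argmax}_{[y]\in\mathbb{RP}^m(r_m)} \mathbb{E}[\langle X,y\rangle^2] = \operatorname{argmin}_{[y]\in\mathbb{RP}^m(r_m)} \mathbb{E}\big[\|\Phi([X]) - \Phi([y])\|^2\big].$$
   Context: For $r>0$, $\mathbb{S}^m(r)\subset\mathbb{R}^{m+1}$ is the sphere of radius $r$ centered at $0$, and $\mathbb{RP}^m(r) = \{[x] : x \in \mathbb{S}^m(r)\}$ with $[x]=\{x,-x\}$; $\langle x,y\rangle^2$ does not depend on the choice of representatives. Define $F_m:\mathbb{R}^{m+1}\times\mathbb{R}^{m+1}\to\mathbb{R}^{\frac{m(m+3)}{2}}$ recursively by $F_1((x_1,x_2),(y_1,y_2)) = (x_1y_1 - x_2y_2,\ x_1y_2 + x_2y_1)$ and, for $x,y\in\mathbb{R}^{m+1}$, $x_{m+2},y_{m+2}\in\mathbb{R}$, $F_{m+1}((x,x_{m+2}),(y,y_{m+2})) = \big(F_m(x,y),\ x_{m+2}y + y_{m+2}x,\ \tau_{m+1}(\langle x,y\rangle - (m+1)x_{m+2}y_{m+2})\big)$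 with $\tau_{m+1} = \sqrt{\frac{2}{(m+1)(m+2)}}$. Then $\Phi([x]) := \frac12\sqrt{\frac{m}{2(m+1)}}\,F_m(x,x)$ for $x \in \mathbb{S}^m(r_m)$ (this is an isometric embedding of $\mathbb{RP}^m(r_m)$, with the metric induced from the round sphere, into the unit sphere $\mathbb{S}^{\frac{m(m+3)}{2}-1}$). *)

From HB Require Import structures.
From mathcomp Require Import all_boot all_order all_algebra.
From mathcomp Require Import all_classical all_reals all_analysis.
Set Implicit Arguments. Unset Strict Implicit. Unset Printing Implicit Defensive.
Import Order.TTheory GRing.Theory Num.Theory.
Local Open Scope ring_scope.

Section Defs.
Variable R : realType.

Definition dotv n (x y : 'rV[R]_n) : R := \sum_(i < n) x 0 i * y 0 i.

Definition sqnorm n (v : 'rV[R]_n) : R := dotv v v.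

Definition on_sphere n (r : R) (x : 'rV[R]_n) : Prop := sqnorm x = r ^+ 2.

Definition r_ (m : nat) : R := Num.sqrt (2 * m.+1%:R / m%:R).

Definition tau (k : nat) : R := Num.sqrt (2 / (k%:R * k.+1%:R)).

Definition vseq n (x : 'rV[R]_n) : seq R := [seq x 0 i | i <- enum 'I_n].

(* F_m on sequences: x, y of length m+1 (x = (x', x_{m+1}) with x' = take m x). *)
Fixpoint Fseq (m : nat) (x y : seq R) : seq R :=
  match m with
  | 0 => [::]
  | m'.+1 =>
    match m' with
    | 0 => [:: nth 0 x 0 * nth 0 y 0 - nth 0 x 1 * nth 0 y 1;
               nth 0 x 0 * nth 0 y 1 + nth 0 x 1 * nth 0 y 0]
    | _ =>
      let x' := take m'.+1 x in let y' := take m'.+1 y in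
      let a := nth 0 x m'.+1 in let b := nth 0 y m'.+1 in
      Fseq m' x' y' ++
      [seq a * yi + b * xi | '(xi, yi) <- zip x' y'] ++
      [:: tau m'.+1 * (\sum_(i < m'.+1) nth 0 x' i * nth 0 y' i
                        - m'.+1%:R * a * b)]
    end
  end.

Definition F (m : nat) (x y : 'rV[R]_m.+1) : 'rV[R]_((m * (m + 3)) %/ 2) :=
  \row_i nth 0 (Fseq m (vseq x) (vseq y)) i.

(* Phi([x]) = 1/2 sqrt(m/(2(m+1))) F_m(x,x), for a representative x *)
Definition Phi (m : nat) (x : 'rV[R]_m.+1) : 'rV[R]_((m * (m + 3)) %/ 2) :=
  (2^-1 * Num.sqrt (m%:R / (2 * m.+1%:R))) *: F x x.

End Defs.

From HB Require Import structures.
From mathcomp Require Import all_boot all_order all_algebra.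
From mathcomp Require Import all_classical all_reals all_analysis.
From mathcomp Require Import ring zify measurable_realfun.
Set Implicit Arguments. Unset Strict Implicit. Unset Printing Implicit Defensive.
Import Order.TTheory GRing.Theory Num.Theory.
Local Open Scope ring_scope.
Local Open Scope classical_set_scope.

(* Unwinding the recursion defining F_m gives, by induction on m,
   <F_m(x,x), F_m(y,y)> = 2 <x,y>^2 - 2/(m+1) |x|^2 |y|^2.  Hence on the sphere of
   radius r_m the squared distance |Phi[x] - Phi[y]|^2 is an affine, strictly
   decreasing function of <x,y>^2.  On the sphere both quantities are bounded, hence
   integrable, so taking expectations, E|Phi[X] - Phi[y]|^2 is the same affine
   decreasing function of E<X,y>^2: maximisers of the latter are exactly the
   minimisers of the former. *)

Section SeqDot.
Variable R : comPzRingType.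
Implicit Types (a b : R) (s t : seq R).

Definition sdot s t : R := \sum_(p <- zip s t) p.1 * p.2.

Definition sdotn n s t : R := \sum_(i < n) nth 0 s i * nth 0 t i.

Lemma sdot_cat s1 s2 t1 t2 : size s1 = size t1 ->
  sdot (s1 ++ s2) (t1 ++ t2) = sdot s1 t1 + sdot s2 t2.
Proof. by move=> eq_size; rewrite /sdot zip_cat // big_cat. Qed.

Lemma sdot_seq1 a b : sdot [:: a] [:: b] = a * b.
Proof. by rewrite /sdot /= big_seq1. Qed.

Lemma sdot_cons a b s t : sdot (a :: s) (b :: t) = a * b + sdot s t.
Proof. by rewrite /sdot /= big_cons. Qed.

Lemma sdotE s t : size s = size t -> sdot s t = sdotn (size s) s t.
Proof.
elim: s t => [|a s IHs] [|b t] //=; first by rewrite /sdot /sdotn big_nil big_ord0.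
by move=> [eq_size]; rewrite sdot_cons IHs // /sdotn big_ord_recl.
Qed.

Lemma sdotnSr n s t :
  sdotn n.+1 s t = sdotn n (take n s) (take n t) + nth 0 s n * nth 0 t n.
Proof.
rewrite /sdotn big_ord_recr /=; congr (_ + _).
by apply: eq_bigr => i _; rewrite !nth_take.
Qed.

Lemma sdot_zip_diag a b s t : size s = size t ->
  sdot [seq a * yi + a * xi | '(xi, yi) <- zip s s]
       [seq b * yi + b * xi | '(xi, yi) <- zip t t] = 4 * a * b * sdot s t.
Proof.
elim: s t => [|x s IHs] [|y t] //=; first by rewrite /sdot big_nil mulr0.
by move=> [eq_size]; rewrite !sdot_cons IHs //; ring.
Qed.

End SeqDot.

Section Fseq.
Variable R : realType.
Implicit Types (x y : seq R).

Lemma FseqSS m x y : Fseq m.+2 x y =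
  Fseq m.+1 (take m.+2 x) (take m.+2 y) ++
  [seq nth 0 x m.+2 * yi + nth 0 y m.+2 * xi
     | '(xi, yi) <- zip (take m.+2 x) (take m.+2 y)] ++
  [:: tau R m.+2 * (sdotn m.+2 (take m.+2 x) (take m.+2 y)
                    - m.+2%:R * nth 0 x m.+2 * nth 0 y m.+2)].
Proof. by []. Qed.

Lemma size_Fseq m x y : (0 < m)%N -> size x = m.+1 -> size y = m.+1 ->
  size (Fseq m x y) = ((m * (m + 3)) %/ 2)%N.
Proof.
elim: m x y => [//|[|m] IHm] x y _ size_x size_y //.
have size_take (z : seq R) : size z = m.+3 -> size (take m.+2 z) = m.+2.
  by move=> size_z; rewrite size_takel // size_z.
rewrite FseqSS !size_cat IHm ?size_take // size_map size_zip !size_take //.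
by rewrite minnn /=; lia.
Qed.

Lemma tau_sqr k : tau R k ^+ 2 = 2 / (k%:R * k.+1%:R).
Proof. by rewrite sqr_sqrtr // divr_ge0 // mulr_ge0. Qed.

(* Writing x = (x', a) and y = (y', b) with x', y' of length k, the inductive step adds
   4 a b <x',y'> from the middle block and tau_k^2 (|x'|^2 - k a^2) (|y'|^2 - k b^2)
   from the last entry. *)
Lemma sdot_Fseq_diag m x y : (0 < m)%N -> size x = m.+1 -> size y = m.+1 ->
  sdot (Fseq m x x) (Fseq m y y) =
  2 * sdotn m.+1 x y ^+ 2 - 2 / m.+1%:R * sdotn m.+1 x x * sdotn m.+1 y y.
Proof.
elim: m x y => [//|[|m] IHm] x y _ size_x size_y.
  case: x size_x => [|x0 [|x1 []]] // _; case: y size_y => [|y0 [|y1 []]] // _.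
  by rewrite /sdotn /= sdot_cons sdot_seq1 !big_ord_recr !big_ord0 /=; field.
have size_take (z : seq R) : size z = m.+3 -> size (take m.+2 z) = m.+2.
  by move=> size_z; rewrite size_takel // size_z.
have size_Fseq_take (z : seq R) : size z = m.+3 ->
    size (Fseq m.+1 (take m.+2 z) (take m.+2 z)) = ((m.+1 * (m.+1 + 3)) %/ 2)%N.
  by move=> size_z; rewrite size_Fseq ?size_take.
rewrite !FseqSS sdot_cat; last by rewrite !size_Fseq_take.
rewrite sdot_cat; last by rewrite !size_map !size_zip !size_take.
rewrite IHm ?size_take // sdot_zip_diag ?size_take // sdot_seq1.
rewrite sdotE ?size_take // !(sdotnSr m.+2) mulrACA -expr2 tau_sqr.
rewrite -[m.+3]addn3 -[m.+2]addn2 !natrD.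
by field; rewrite -!natrD !pnatr_eq0 addn3 addn2.
Qed.

End Fseq.

Section RowDot.
Variables (R : realType) (n : nat).
Implicit Types (u v : 'rV[R]_n).

Lemma nth_vseq u (i : 'I_n) : nth 0 (vseq u) i = u 0 i.
Proof. by rewrite /vseq (nth_map i) ?size_enum_ord // nth_ord_enum. Qed.

Lemma size_vseq u : size (vseq u) = n.
Proof. by rewrite /vseq size_map size_enum_ord. Qed.

Lemma dotv_vseq u v : dotv u v = sdotn n (vseq u) (vseq v).
Proof. by apply: eq_bigr => i _; rewrite !nth_vseq. Qed.

Lemma sqnorm_ge0 u : 0 <= sqnorm u.
Proof. by apply: sumr_ge0 => i _; rewrite -expr2 sqr_ge0. Qed.

Lemma sqnormB u v : sqnorm (u - v) = sqnorm u - 2 * dotv u v + sqnorm v.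
Proof.
rewrite /sqnorm /dotv mulr_sumr -sumrB -big_split /=.
by apply: eq_bigr => i _; rewrite !mxE; ring.
Qed.

Lemma sqnormZ (a : R) u : sqnorm (a *: u) = a ^+ 2 * sqnorm u.
Proof. by rewrite /sqnorm /dotv mulr_sumr; apply: eq_bigr => i _; rewrite !mxE; ring. Qed.

End RowDot.

Section PhiDistance.
Variables (R : realType) (m : nat).
Hypothesis m_gt0 : (0 < m)%N.
Implicit Types (x y : 'rV[R]_m.+1).

Lemma dotv_F x y :
  dotv (F x x) (F y y) = 2 * dotv x y ^+ 2 - 2 / m.+1%:R * sqnorm x * sqnorm y.
Proof.
rewrite /sqnorm !dotv_vseq -sdot_Fseq_diag ?size_vseq //.
rewrite sdotE ?size_Fseq ?size_vseq //.
by apply: eq_bigr => i _; rewrite !nth_vseq !mxE.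
Qed.

Lemma sqnorm_Phi_sub x y : sqnorm (Phi x - Phi y) =
  m%:R / (4 * m.+1%:R) * (m%:R / m.+1%:R * (sqnorm x ^+ 2 + sqnorm y ^+ 2)
                          + 2 / m.+1%:R * sqnorm x * sqnorm y - 2 * dotv x y ^+ 2).
Proof.
rewrite /Phi -scalerBr sqnormZ sqnormB [sqnorm (F x x)]/sqnorm [sqnorm (F y y)]/sqnorm.
rewrite !dotv_F -/(sqnorm x) -/(sqnorm y) exprMn sqr_sqrtr ?divr_ge0 ?mulr_ge0 //.
by field; rewrite addrC natr1 pnatr_eq0.
Qed.

Lemma r_sqr : r_ R m ^+ 2 = 2 * m.+1%:R / m%:R.
Proof. by rewrite sqr_sqrtr // divr_ge0 // mulr_ge0. Qed.

Lemma sqnorm_Phi_sub_sphere x y : on_sphere (r_ R m) x -> on_sphere (r_ R m) y ->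
  sqnorm (Phi x - Phi y) = - (m%:R / (2 * m.+1%:R)) * dotv x y ^+ 2 + 2 * m.+1%:R / m%:R.
Proof.
move=> sx sy; rewrite sqnorm_Phi_sub sx sy r_sqr.
by field; rewrite addrC natr1 !pnatr_eq0 -lt0n m_gt0.
Qed.

Lemma sqr_dotv_sphere_le x y : on_sphere (r_ R m) x -> on_sphere (r_ R m) y ->
  dotv x y ^+ 2 <= (2 * m.+1%:R / m%:R) ^+ 2.
Proof.
move=> sx sy; have := sqnorm_ge0 (Phi x - Phi y).
rewrite sqnorm_Phi_sub_sphere // -[m%:R / _]invf_div mulNr addrC subr_ge0.
by rewrite ler_pdivrMl ?divr_gt0 ?mulr_gt0 ?ltr0n // expr2.
Qed.

End PhiDistance.

Lemma bounded_Lfun1 d (T : measurableType d) (R : realType)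
    (mu : {finite_measure set T -> \bar R}) (f : T -> R) (B : R) :
  measurable_fun setT f -> (forall w, `|f w| <= B) -> f \in Lfun mu 1.
Proof.
move=> mf f_le; apply/Lfun1_integrable/measurable_bounded_integrable => //.
  by rewrite fin_num_fun_lty //; exact: fin_num_measure.
exists B; split; first exact: num_real.
by move=> M B_lt_M w _; exact: le_trans (f_le w) (ltW B_lt_M).
Qed.

Lemma measurable_sqr_dotv_row d (T : measurableType d) (R : realType) n
    (X : 'I_n -> T -> R) (z : 'rV[R]_n) :
  (forall i, measurable_fun setT (X i)) ->
  measurable_fun setT (fun w => dotv (\row_i X i w) z ^+ 2).
Proof.
move=> mX; apply: measurable_funX.
have -> : (fun w => dotv (\row_i X i w) z) = (fun w => \sum_(i < n) X i w * z 0 i).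
  by apply/funext => w; apply: eq_bigr => i _; rewrite mxE.
by apply: measurable_sum => i; exact: measurable_funM.
Qed.

Lemma argmax_eq_argmin_affine (R : realType) (Y : Type) (S : set Y)
    (g f : Y -> \bar R) (a k : R) :
  0 < k -> (forall y, S y -> g y \is a fin_num) ->
  (forall y, S y -> f y = (a - k * fine (g y))%:E) ->
  [set y | S y /\ forall z, S z -> (g z <= g y)%E] =
  [set y | S y /\ forall z, S z -> (f y <= f z)%E].
Proof.
move=> k_gt0 g_fin fE; apply/seteqP; split=> y /= [Sy y_opt]; split=> // z Sz;
  have := y_opt z Sz; rewrite !fE // -(fineK (g_fin _ Sy)) -(fineK (g_fin _ Sz)) /=;
  by rewrite !lee_fin lerD2l lerN2 ler_pM2l.
Qed.

Section ExpectedPhiDistance.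
Context d (T : measurableType d) (R : realType) (P : probability T R).
Variables (m : nat) (X : 'I_m.+1 -> T -> R).
Hypotheses (m_gt0 : (0 < m)%N) (mX : forall i, measurable_fun setT (X i))
  (X_sphere : forall w, on_sphere (r_ R m) (\row_i X i w)).

Lemma Lfun1_sqr_dotv z : on_sphere (r_ R m) z ->
  (fun w => dotv (\row_i X i w) z ^+ 2) \in Lfun P 1.
Proof.
move=> z_sphere; apply: bounded_Lfun1; first exact: measurable_sqr_dotv_row.
by move=> w; rewrite ger0_norm ?sqr_ge0 //; exact: sqr_dotv_sphere_le.
Qed.

Lemma expectation_sqnorm_Phi_sub y : on_sphere (r_ R m) y ->
  'E_P[fun w => sqnorm (Phi (\row_i X i w) - Phi y)]%E =
  (2 * m.+1%:R / m%:R
   - m%:R / (2 * m.+1%:R) * fine 'E_P[fun w => (dotv (\row_i X i w) y ^+ 2)%R]%E)%:E.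
Proof.
move=> y_sphere; have dot_Lfun1 := Lfun1_sqr_dotv y_sphere.
have -> : (fun w => sqnorm (Phi (\row_i X i w) - Phi y)) =
    cst (2 * m.+1%:R / m%:R)
    \- m%:R / (2 * m.+1%:R) \o* (fun w => dotv (\row_i X i w) y ^+ 2).
  by apply/funext => w; rewrite sqnorm_Phi_sub_sphere //=; ring.
rewrite expectationB ?Lfun_cst ?Lfun_scale // expectation_cst expectationZl //.
by rewrite -[in LHS](fineK (expectation_fin_num dot_Lfun1)).
Qed.

End ExpectedPhiDistance.

Theorem theorem3p14 (R : realType) (m : nat) (hm : (2 <= m)%N) :
  (forall x y : 'rV[R]_m.+1,
     on_sphere (r_ R m) x -> on_sphere (r_ R m) y ->
     sqnorm (Phi x - Phi y)
       = - (m%:R / (2 * m.+1%:R)) * (dotv x y) ^+ 2 + 2 * m.+1%:R / m%:R)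
  /\
  (forall (d : measure_display) (T : measurableType d) (P : probability T R)
          (X : 'I_m.+1 -> T -> R),
     (forall i, measurable_fun setT (X i)) ->
     (forall w, on_sphere (r_ R m) (\row_i X i w)) ->
     [set y : 'rV[R]_m.+1 | on_sphere (r_ R m) y /\
        forall z, on_sphere (r_ R m) z ->
          ('E_P[fun w => ((dotv (\row_i X i w) z) ^+ 2)%R]
             <= 'E_P[fun w => ((dotv (\row_i X i w) y) ^+ 2)%R])%E]
     =
     [set y : 'rV[R]_m.+1 | on_sphere (r_ R m) y /\
        forall z, on_sphere (r_ R m) z ->
          ('E_P[fun w => (sqnorm (Phi (\row_i X i w) - Phi y))%R]
             <= 'E_P[fun w => (sqnorm (Phi (\row_i X i w) - Phi z))%R])%E]).
Proof.
have m_gt0 : (0 < m)%N by exact: ltnW.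
split=> [x y|d T P X mX X_sphere]; first exact: sqnorm_Phi_sub_sphere.
apply: (argmax_eq_argmin_affine (k := m%:R / (2 * m.+1%:R))).
- by rewrite divr_gt0 ?mulr_gt0 ?ltr0n.
- by move=> y y_sphere; apply/expectation_fin_num/Lfun1_sqr_dotv.
- by move=> y y_sphere; exact: expectation_sqnorm_Phi_sub.
Qed.
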